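(* For every $m\ge2$, $\mathbf{E}_m\subseteq\mathbf{T}_m^1$.
   Context: All varieties are varieties of monoids (signature: associative binary operation and identity constant $1$); identities are pairs of words over a countably infinite set of variables, and variables may be substituted by $1$. $\mathbf{O}$ is the variety defined by $xyt_1xt_2y \approx yxt_1xt_2y$, $xt_1xyt_2y \approx xt_1yxt_2y$, $xt_1yt_2xy \approx xt_1yt_2yx$. For $m\ge1$, $\mathbf{E}_m$ is the subvariety of $\mathbf{O}$ defined additionally by $x^{m+1}\approx x^m$ and $x^mt\approx tx^m$. For $m\ge2$, a semigroup is $m$-testable if it satisfies every semigroup identity $\mathbf{u}\approx\mathbf{v}$ (between nonempty words) such that $\mathbf{u},\mathbf{v}$ have the same prefix of length $m-1$, the same suffix of length $m-1$, and the same set of factors of length $m$. $T_m$ is a finite semigroup generating the variety of all $m$-testable semigroups; $T_m$ satisfies an identity iff these three conditions hold for it. $T_m^1$ is $T_m$ with an external identity element adjoined, and $\mathbf{T}_m^1$ is the monoid variety generated by $T_m^1$. *)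

From mathcomp Require Import all_boot.
Set Implicit Arguments. Unset Strict Implicit. Unset Printing Implicit Defensive.

Record monoid := Monoid {
  mcar :> Type;
  mop : mcar -> mcar -> mcar;
  mone : mcar;
  mopA : forall a b c, mop a (mop b c) = mop (mop a b) c;
  mop1l : forall a, mop mone a = a;
  mop1r : forall a, mop a mone = a }.

Record semigroup := Semigroup {
  scar :> Type;
  sop : scar -> scar -> scar;
  sopA : forall a b c, sop a (sop b c) = sop (sop a b) c }.

Definition word := seq nat.

Definition meval (M : monoid) (f : nat -> M) (w : word) : M :=
  foldr (fun x acc => mop (f x) acc) (mone M) w.

(** Monoid identity u ~ v holds in M (variables may take value 1). *)
Definition mholds (M : monoid) (u v : word) : Prop :=
  forall f : nat -> M, meval f u = meval f v.

Definition seval (S : semigroup) (f : nat -> S) (w : word) : option S :=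
  match w with
  | [::] => None
  | x :: w' => Some (foldl (fun a y => sop a (f y)) (f x) w')
  end.

Definition sholds (S : semigroup) (u v : word) : Prop :=
  forall f : nat -> S, seval f u = seval f v.

(** S^1 : S with an external identity adjoined (None). *)
Definition adj_op (S : semigroup) (a b : option S) : option S :=
  match a, b with
  | None, _ => b
  | _, None => a
  | Some x, Some y => Some (sop x y)
  end.

Lemma adj_opA (S : semigroup) (a b c : option S) :
  adj_op a (adj_op b c) = adj_op (adj_op a b) c.
Proof. by case: a => [a|]; case: b => [b|]; case: c => [c|] //=; rewrite sopA. Qed.

Lemma adj_op1l (S : semigroup) (a : option S) : adj_op None a = a.
Proof. by []. Qed.

Lemma adj_op1r (S : semigroup) (a : option S) : adj_op a None = a.
Proof. by case: a. Qed.

Definition adjoin_one (S : semigroup) : monoid :=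
  @Monoid (option S) (@adj_op S) None (@adj_opA S) (@adj_op1l S) (@adj_op1r S).

Definition prefix_len (k : nat) (w : word) : word := take k w.
Definition suffix_len (k : nat) (w : word) : word := drop (size w - k) w.

Definition testable_cond (m : nat) (u v : word) : Prop :=
  [/\ prefix_len m.-1 u = prefix_len m.-1 v,
      suffix_len m.-1 u = suffix_len m.-1 v &
      forall s : word, size s = m -> infix s u = infix s v].

(** T is a semigroup satisfying exactly the m-testable identities
    (the defining property of T_m given in the paper). *)
Definition is_Tm (m : nat) (T : semigroup) : Prop :=
  forall u v : word, u != [::] -> v != [::] ->
    (sholds T u v <-> testable_cond m u v).

(** Membership of a monoid in the variety generated by the monoid A:
    M satisfies every identity of A (Birkhoff: var A = Mod (Id A)). *)
Definition in_var_gen (A M : monoid) : Prop :=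
  forall u v : word, mholds A u v -> mholds M u v.

Definition vx := 0. Definition vy := 1. Definition vt1 := 2. Definition vt2 := 3.

Definition in_O (M : monoid) : Prop :=
  [/\ mholds M [:: vx; vy; vt1; vx; vt2; vy] [:: vy; vx; vt1; vx; vt2; vy],
      mholds M [:: vx; vt1; vx; vy; vt2; vy] [:: vx; vt1; vy; vx; vt2; vy] &
      mholds M [:: vx; vt1; vy; vt2; vx; vy] [:: vx; vt1; vy; vt2; vy; vx]].

Definition in_E (m : nat) (M : monoid) : Prop :=
  [/\ in_O M,
      mholds M (nseq m.+1 vx) (nseq m vx) &
      mholds M (rcons (nseq m vx) vt1) (vt1 :: nseq m vx)].

(* Let u = v hold in T_m^1.  Since variables may be deleted (assigned 1), every
   restriction of u and v to a set of letters is an m-testable pair; surrounding the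
   restrictions by fresh letters turns this into: every factor of length at most m of
   the padded restriction of u is one of v.  Hence the letters occurring once in u
   ("linear" letters) occur once in v and in the same order, x^m is a factor of the
   restriction of u to x and the linear letters iff it is one for v, and for every other
   letter y the number of occurrences of y between two consecutive linear letters is
   the same in u and v (these numbers are < m and are read off the short factors).
   Conversely, in a monoid of E_m every word w equals a canonical form: each such x^m
   can be collected, moved to the front (x^m is central) where it absorbs all other
   occurrences of x, and the identities of O allow to permute freely the remaining
   letters between consecutive linear letters, each of which occurs at least twice. The
   canonical forms of u and v then coincide. *)

From mathcomp Require Import all_boot zify.
Set Implicit Arguments. Unset Strict Implicit. Unset Printing Implicit Defensive.

Lemma filter_pred1 (T : eqType) (x : T) s : filter (pred1 x) s = nseq (count_mem x s) x.
Proof. by elim: s => //= y s IH; case: eqP => [->|] //=; rewrite IH. Qed.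

Lemma count_mem_filter (T : eqType) (P : pred T) (y : T) s :
  P y -> count_mem y (filter P s) = count_mem y s.
Proof. by move=> Py; rewrite count_filter; apply: eq_count => z /=; case: eqP => // ->. Qed.

Lemma filter_eq_cat (T : Type) (P : pred T) w p r : filter P w = p ++ r ->
  exists w1 w2, [/\ w = w1 ++ w2, filter P w1 = p & filter P w2 = r].
Proof.
elim: w p => [|a w IH] p /=.
  by case: p r => [|? ?] [|? ?] //= _; exists [::], [::].
case: ifP => Pa.
  case: p => [|b p] /=.
    by move=> E; exists [::], (a :: w); rewrite /= Pa E.
  case=> <- /IH [w1 [w2 [-> F1 F2]]].
  by exists (a :: w1), w2; rewrite /= Pa F1.
move=> /IH [w1 [w2 [-> F1 F2]]].
by exists (a :: w1), w2; rewrite /= Pa F1.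
Qed.

Lemma mem_other_occurrence (T : eqType) (a : T) c s d : count_mem a s <= 1 ->
  1 < count_mem a (c ++ s ++ d) -> a \in c ++ d.
Proof. by move=> s1; apply: contraLR => /count_memPn; rewrite !count_cat; lia. Qed.

Lemma infix_cat_notin (T : eqType) (a : T) s p w :
  a \notin p -> infix (a :: s) (p ++ w) -> infix (a :: s) w.
Proof.
elim: p => //= y p IH; rewrite inE negb_or => /andP[ay ap].
by rewrite (negbTE ay) /=; exact: IH.
Qed.

Lemma infix_cons_prefix (T : eqType) (a : T) s w :
  a \notin w -> infix (a :: s) (a :: w) -> prefix s w.
Proof.
move=> aw; rewrite infix_consl prefix_cons eqxx /= => /orP[//|].
by move/mem_infix => /(_ a (mem_head _ _)); rewrite (negbTE aw).
Qed.

Lemma prefix_nseq_eq (T : eqType) (x a a' : T) d d' r : a != x -> a' != x ->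
  prefix (nseq d x ++ [:: a]) (nseq d' x ++ a' :: r) -> d = d'.
Proof.
move=> ax a'x; elim: d d' => [|d IH] [|d'] //=; rewrite ?prefix_cons.
- by rewrite (negbTE ax).
- by rewrite eq_sym (negbTE a'x).
- by rewrite eqxx /= => /IH ->.
Qed.

Lemma prefix_nseq_leq (T : eqType) (x a' : T) k d' r : a' != x ->
  prefix (nseq k x) (nseq d' x ++ a' :: r) -> k <= d'.
Proof.
move=> a'x; elim: k d' => [|k IH] [|d'] //=; rewrite ?prefix_cons.
- by rewrite eq_sym (negbTE a'x).
- by rewrite eqxx /= => /IH.
Qed.

Lemma infix_extend (T : eqType) (s w : seq T) n : size s <= n -> n <= size w -> infix s w ->
  exists r, [/\ size r = n, infix s r & infix r w].
Proof.
move=> sn nw /infixP [p [q Ew]]; subst w; rewrite !size_cat in nw.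
case: (leqP (n - size s) (size q)) => hq.
  exists (s ++ take (n - size s) q); split.
  - by rewrite size_cat size_takel // subnKC.
  - exact: prefix_infix.
  - by rewrite -{2}(cat_take_drop (n - size s) q) (catA s) infix_infix.
exists (drop (size p - (n - size s - size q)) p ++ s ++ q); split.
- by rewrite !size_cat size_drop; lia.
- exact: infix_infix.
- rewrite -[in X in infix _ X](cat_take_drop (size p - (n - size s - size q)) p) -catA.
  exact: infix_catl (infix_refl _).
Qed.

Lemma ltn_foldr_maxn (z : nat) s : z \in s -> z < (foldr maxn 0 s).+1.
Proof. by elim: s => //= a s IH; rewrite inE => /orP[/eqP->|/IH]; lia. Qed.

Lemma uniq_filter_linear (T : eqType) (L : pred T) s :
  (forall z, L z -> count_mem z s = 1) -> uniq (filter L s).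
Proof.
move=> Ls; apply: count_mem_uniq => z; rewrite mem_filter.
case Lz: (L z) => /=; last by apply/count_memPn; rewrite mem_filter Lz.
by rewrite count_mem_filter // Ls // -has_pred1 has_count Ls.
Qed.

Lemma map_count_mem_notin (T : eqType) (y : T) (bs : seq (seq T)) :
  (forall b, b \in bs -> y \notin b) -> map (count_mem y) bs = nseq (size bs) 0.
Proof.
move=> Hy; rewrite -(size_map (count_mem y)); apply/all_pred1P/allP => c /mapP [b bb ->].
exact/eqP/count_memPn/Hy.
Qed.

Lemma eq_map_sort (bs bs' : seq word) : size bs = size bs' ->
  (forall y, map (count_mem y) bs = map (count_mem y) bs') ->
  map (sort leq) bs = map (sort leq) bs'.
Proof.
move=> sz Hc; apply: (@eq_from_nth _ [::]); rewrite !size_map // => i hi.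
rewrite !(nth_map [::]) -?sz //.
apply/perm_sortP; [exact: leq_total | exact: leq_trans | exact: anti_leq |].
apply/allP => y _; apply/eqP.
by have := congr1 (nth 0 ^~ i) (Hc y); rewrite !(nth_map [::]) -?sz.
Qed.

Definition subst (s : nat -> word) (w : word) : word := flatten (map s w).

Lemma subst_cat s u v : subst s (u ++ v) = subst s u ++ subst s v.
Proof. by rewrite /subst map_cat flatten_cat. Qed.

Lemma subst_nseq s k i x : s i = [:: x] -> subst s (nseq k i) = nseq k x.
Proof. by move=> si; elim: k => //= k IH; rewrite /subst /= si /= -IH. Qed.

Section MonoidIdentities.
Variable M : monoid.
Implicit Types (u v w c d : word).

Lemma meval_cat (f : nat -> M) u v : meval f (u ++ v) = mop (meval f u) (meval f v).
Proof. by elim: u => [|x u IH] /=; rewrite ?mop1l // IH mopA. Qed.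

Lemma meval_subst (f : nat -> M) s w :
  meval f (subst s w) = meval (fun i => meval f (s i)) w.
Proof. by elim: w => //= i w IH; rewrite /subst /= meval_cat -IH. Qed.

Lemma mholds_refl w : mholds M w w. Proof. by []. Qed.

Lemma mholds_sym u v : mholds M u v -> mholds M v u.
Proof. by move=> H f; rewrite H. Qed.

Lemma mholds_trans u v w : mholds M u v -> mholds M v w -> mholds M u w.
Proof. by move=> H1 H2 f; rewrite H1 H2. Qed.

Lemma mholds_ctx c d u v : mholds M u v -> mholds M (c ++ u ++ d) (c ++ v ++ d).
Proof. by move=> H f; rewrite !meval_cat H. Qed.

Lemma mholds_subst s u v : mholds M u v -> mholds M (subst s u) (subst s v).
Proof. by move=> H f; rewrite !meval_subst H. Qed.

Lemma mholds_instance c d s u v :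
  mholds M u v -> mholds M (c ++ subst s u ++ d) (c ++ subst s v ++ d).
Proof. by move=> /(mholds_subst s); apply: mholds_ctx. Qed.

End MonoidIdentities.

Section VarietyO.
Variables (M : monoid) (HO : in_O M).
Implicit Types (c d : word).

Let O_subst (x y : nat) (t1 t2 : word) := nth [::] [:: [:: x]; [:: y]; t1; t2].

Lemma mholds_O_front c x y t1 t2 d :
  mholds M (c ++ x :: y :: t1 ++ x :: t2 ++ y :: d) (c ++ y :: x :: t1 ++ x :: t2 ++ y :: d).
Proof.
have [H _ _] := HO.
have := mholds_instance c d (O_subst x y t1 t2) H.
by rewrite /subst /O_subst /vx /vy /vt1 /vt2 /= -!catA /= -!catA.
Qed.

Lemma mholds_O_middle c x y t1 t2 d :
  mholds M (c ++ x :: t1 ++ x :: y :: t2 ++ y :: d) (c ++ x :: t1 ++ y :: x :: t2 ++ y :: d).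
Proof.
have [_ H _] := HO.
have := mholds_instance c d (O_subst x y t1 t2) H.
by rewrite /subst /O_subst /vx /vy /vt1 /vt2 /= -!catA /= -!catA.
Qed.

Lemma mholds_O_back c x y t1 t2 d :
  mholds M (c ++ x :: t1 ++ y :: t2 ++ x :: y :: d) (c ++ x :: t1 ++ y :: t2 ++ y :: x :: d).
Proof.
have [_ _ H] := HO.
have := mholds_instance c d (O_subst x y t1 t2) H.
by rewrite /subst /O_subst /vx /vy /vt1 /vt2 /= -!catA /= -!catA.
Qed.

(* Each relative position of the other occurrences of [a] and [b] is an instance of
   one of the three identities of O. *)
Lemma mholds_swap_adjacent c a b d : a \in c ++ d -> b \in c ++ d ->
  mholds M (c ++ a :: b :: d) (c ++ b :: a :: d).
Proof.
have [->|neab] := eqVneq a b; first by move=> _ _; apply: mholds_refl.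
have nb (s : word) : b \in a :: s -> b \in s by rewrite inE eq_sym (negbTE neab).
rewrite !mem_cat => /orP[] Ha /orP[] Hb.
- move: Hb; case/splitPr: Ha => c1 c2; rewrite mem_cat => /orP[] Hb.
    case/splitPr: Hb => e1 e2; rewrite -?catA /= -?catA.
    exact/mholds_sym/mholds_O_back.
  case/splitPr: (nb _ Hb) => e1 e2; rewrite -?catA /= -?catA.
  exact: mholds_O_back.
- case/splitPr: Ha => c1 c2; case/splitPr: Hb => d1 d2; rewrite -?catA /= -?catA.
  exact: mholds_O_middle.
- case/splitPr: Ha => d1 d2; case/splitPr: Hb => c1 c2; rewrite -?catA /= -?catA.
  exact/mholds_sym/mholds_O_middle.
- move: Hb; case/splitPr: Ha => d1 d2; rewrite mem_cat => /orP[] Hb.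
    case/splitPr: Hb => e1 e2; rewrite -?catA /= -?catA.
    exact/mholds_sym/mholds_O_front.
  case/splitPr: (nb _ Hb) => e1 e2; rewrite -?catA /= -?catA.
  exact: mholds_O_front.
Qed.

Lemma mholds_swap w0 c a b d : perm_eq (c ++ a :: b :: d) w0 ->
  1 < count_mem a w0 -> 1 < count_mem b w0 ->
  mholds M (c ++ a :: b :: d) (c ++ b :: a :: d).
Proof.
move=> P; rewrite -!(permP P) => Ha Hb.
have [->|neab] := eqVneq a b; first exact: mholds_refl.
apply: mholds_swap_adjacent.
  by apply: (@mem_other_occurrence _ a c [:: a; b] d) Ha; rewrite /= eqxx eq_sym (negbTE neab).
by apply: (@mem_other_occurrence _ b c [:: a; b] d) Hb; rewrite /= eqxx (negbTE neab).
Qed.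

Lemma mholds_move w0 c a r d : perm_eq (c ++ a :: r ++ d) w0 ->
  (forall y, y \in a :: r -> 1 < count_mem y w0) ->
  mholds M (c ++ a :: r ++ d) (c ++ r ++ a :: d).
Proof.
elim: r c => [|y r IH] c P H /=; first exact: mholds_refl.
apply: mholds_trans (_ : mholds M (c ++ y :: a :: r ++ d) _).
  by apply: (mholds_swap P); apply: H; rewrite !inE eqxx ?orbT.
have := IH (rcons c y); rewrite !cat_rcons; apply.
  apply: perm_trans P; rewrite perm_cat2l.
  by apply/permPl; exact: (perm_catCA [:: y] [:: a] (r ++ d)).
by move=> z; rewrite inE => /orP[/eqP->|zr]; apply: H; rewrite !inE ?eqxx ?zr ?orbT.
Qed.

Lemma mholds_perm w0 s s' c d : perm_eq s s' -> perm_eq (c ++ s ++ d) w0 ->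
  (forall y, y \in s -> 1 < count_mem y w0) ->
  mholds M (c ++ s ++ d) (c ++ s' ++ d).
Proof.
elim: s s' c => [|a s IH] s' c Pss P H.
  by case: s' Pss => [_|? ? /perm_size //]; apply: mholds_refl.
have Ha : a \in s' by rewrite -(perm_mem Pss) inE eqxx.
move: Pss; case/splitPr: Ha => s1 s2 Pss.
have {}Pss : perm_eq s (s1 ++ s2).
  rewrite -(perm_cons a) (perm_trans Pss) //.
  by apply/permPl; exact: (perm_catCA s1 [:: a] s2).
apply: mholds_trans (_ : mholds M (c ++ a :: (s1 ++ s2) ++ d) _).
  have := IH _ (rcons c a) Pss; rewrite !cat_rcons; apply => //.
  by move=> y ys; apply: H; rewrite inE ys orbT.
rewrite -catA.
have := @mholds_move w0 c a s1 (s2 ++ d); rewrite -catA /=; apply.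
  apply: perm_trans P; rewrite perm_cat2l /= perm_cons catA perm_cat2r.
  by rewrite perm_sym.
move=> y; rewrite inE => /orP[/eqP->|ys]; apply: H; first by rewrite inE eqxx.
by rewrite inE (perm_mem Pss) mem_cat ys orbT.
Qed.

End VarietyO.

Definition pow_factor (m : nat) (L : pred nat) (w : word) (x : nat) : bool :=
  infix (nseq m x) (filter (predU (pred1 x) L) w).

Lemma pow_factor_count m L w x : pow_factor m L w x -> m <= count_mem x w.
Proof.
move/infixW/(leq_count_subseq (pred1 x)); rewrite count_nseq /= eqxx mul1n => /leq_trans.
by apply; rewrite count_filter; apply: sub_count => z /andP[].
Qed.

Section VarietyE.
Variables (M : monoid) (m : nat).
Hypotheses (HO : in_O M) (Hidem : mholds M (nseq m.+1 vx) (nseq m vx))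
  (Hcent : mholds M (rcons (nseq m vx) vt1) (vt1 :: nseq m vx)).

Lemma mholds_pow_idem x : mholds M (nseq m.+1 x) (nseq m x).
Proof. by have := mholds_subst (fun=> [:: x]) Hidem; rewrite !(@subst_nseq _ _ _ x). Qed.

Lemma mholds_pow_central x r : mholds M (nseq m x ++ r) (r ++ nseq m x).
Proof.
pose s i := if i == vx then [:: x] else r.
have := mholds_subst s Hcent.
rewrite -cats1 -[vt1 :: nseq _ _]cat1s !subst_cat !(@subst_nseq s _ _ x) //.
by rewrite /subst /= !cats0.
Qed.

Lemma mholds_pow_absorb x r :
  mholds M (nseq m x ++ r) (nseq m x ++ [seq y <- r | y != x]).
Proof.
elim: r => [|y r IH] /=; first exact: mholds_refl.
case: eqP => [->|ne].
  apply: mholds_trans IH; rewrite -cat1s catA -[[:: x]]/(nseq 1 x) -nseqD addn1.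
  exact: (mholds_ctx [::] r (mholds_pow_idem x)).
have Cy t : mholds M (nseq m x ++ y :: t) (y :: nseq m x ++ t).
  by have := mholds_ctx [::] t (mholds_pow_central x [:: y]); rewrite /= -!catA.
apply: mholds_trans (Cy _) _; apply: mholds_trans (mholds_sym (Cy _)).
by have := mholds_ctx [:: y] [::] IH; rewrite !cats0.
Qed.

(* The factor [x^m] of the restriction of [w] spans a factor of [w] without letters
   of [L], which is rearranged so as to contain [x^m]; this power is then moved to
   the front, where it absorbs the other occurrences of [x]. *)
Lemma mholds_extract_pow (L : pred nat) x w : ~~ L x -> pow_factor m L w x ->
  (forall y, y \in w -> ~~ L y -> 1 < count_mem y w) ->
  mholds M w (nseq m x ++ [seq y <- w | y != x]).
Proof.
move=> nLx /infixP [p [q Hf]] NL.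
have [w1 [w23 [Ew F1 F23]]] := filter_eq_cat Hf.
have [s0 [w3 [Ew23 Fs F3]]] := filter_eq_cat F23.
subst w w23.
have s0L y : y \in s0 -> ~~ L y.
  move=> ys; apply: contraNN nLx => Ly.
  have : y \in filter (predU (pred1 x) L) s0 by rewrite mem_filter /= Ly orbT ys.
  by rewrite Fs mem_nseq => /andP[_ /eqP <-].
have cx : count_mem x s0 = m.
  have := congr1 (count_mem x) Fs; rewrite count_nseq /= eqxx mul1n count_filter.
  by move=> <-; apply: eq_count => y /=; case: eqP => //= ->; rewrite eqxx.
set s1 := [seq y <- s0 | y != x].
have Ps : perm_eq s0 (nseq m x ++ s1).
  rewrite -cx -filter_pred1 perm_sym; apply/permPl; exact: perm_filterC.
apply: mholds_trans (_ : mholds M (w1 ++ (nseq m x ++ s1) ++ w3) _).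
  apply: (mholds_perm HO (w0 := w1 ++ s0 ++ w3)) => // y ys.
  by apply: NL; [rewrite !mem_cat ys orbT | exact: s0L].
apply: mholds_trans (_ : mholds M (nseq m x ++ w1 ++ s1 ++ w3) _).
  have := mholds_ctx [::] (s1 ++ w3) (mholds_pow_central x w1).
  by rewrite /= -!catA => /mholds_sym.
apply: mholds_trans (mholds_pow_absorb x (w1 ++ s1 ++ w3)) _.
by rewrite !filter_cat /s1 filter_id.
Qed.

Lemma mholds_extract_pows (L : pred nat) (A : seq nat) w : uniq A ->
  (forall x, x \in A -> ~~ L x /\ pow_factor m L w x) ->
  (forall y, y \in w -> ~~ L y -> 1 < count_mem y w) ->
  mholds M w (flatten [seq nseq m x | x <- A] ++ [seq y <- w | y \notin A]).
Proof.
elim: A w => [|x A IH] w /=.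
  by move=> _ _ _; rewrite (eq_filter (a2 := predT)) // filter_predT.
case/andP=> xA uA HA NL.
have [nLx abx] := HA x (mem_head _ _).
apply: mholds_trans (mholds_extract_pow nLx abx NL) _; rewrite -catA.
set w' := [seq y <- w | y != x].
have -> : [seq y <- w | y \notin x :: A] = [seq y <- w' | y \notin A].
  by rewrite /w' -filter_predI; apply: eq_filter => y /=; rewrite inE negb_or andbC.
suff /(mholds_ctx (nseq m x) [::]) : mholds M w'
    (flatten [seq nseq m x0 | x0 <- A] ++ [seq y <- w' | y \notin A]) by rewrite !cats0.
apply: IH => //.
  move=> x' x'A; have [nL ab] := HA x' (mem_behead (s := x :: A) x'A); split => //.
  rewrite /pow_factor /w' -filter_predI (eq_filter (a2 := predU (pred1 x') L)) //.
  move=> y /=; case: eqP => [->|] /=.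
    by case: eqP => // Ex; move: xA; rewrite -Ex x'A.
  by case Ly: (L y) => //= _; apply/eqP => Eyx; move: nLx; rewrite -Eyx Ly.
move=> y; rewrite /w' mem_filter => /andP[yx yw] nLy.
by rewrite count_mem_filter ?NL.
Qed.

End VarietyE.

(* The factors of [w] between consecutive letters of [L], including the (possibly
   empty) ones before the first and after the last. *)
Fixpoint blocks (L : pred nat) (w : word) : seq word :=
  match w with
  | [::] => [:: [::]]
  | x :: w' => let bs := blocks L w' in
      if L x then [::] :: bs else (x :: head [::] bs) :: behead bs
  end.

Fixpoint weave (bs : seq word) (ts : word) : word :=
  match bs, ts with
  | [::], _ => [::]
  | [:: b & _], [::] => b
  | b :: bs', t :: ts' => b ++ t :: weave bs' ts'
  end.

Lemma blocksE L w : blocks L w = head [::] (blocks L w) :: behead (blocks L w).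
Proof. by case: w => //= x w; case: (L x). Qed.

Lemma size_blocks L w : size (blocks L w) = (size (filter L w)).+1.
Proof.
elim: w => //= x w IH; case: (L x) => /=; rewrite ?IH //.
by move: IH; case: (blocks L w).
Qed.

Lemma filter_weave_blocks (L Q : pred nat) w : (forall y, L y -> Q y) ->
  filter Q w = weave (map (filter Q) (blocks L w)) (filter L w).
Proof.
move=> LQ; elim: w => [|x w IH] //=.
case Lx: (L x) => /=; first by rewrite (LQ _ Lx) IH.
move: IH; rewrite [in X in X -> _](blocksE L w).
set hd := head [::] _; set tl := behead _ => IH.
by case: (Q x); rewrite IH; case: (filter L w).
Qed.

Lemma weave_blocks L w : weave (blocks L w) (filter L w) = w.
Proof.
have := @filter_weave_blocks L predT w (fun _ _ => erefl).
by rewrite filter_predT (eq_map (fun s => filter_predT s)) map_id => {3}->.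
Qed.

Lemma flatten_blocks L w : flatten (blocks L w) = filter (predC L) w.
Proof.
elim: w => //= x w IH; case: (L x) => //=.
by rewrite -IH [in RHS](blocksE L w).
Qed.

Lemma blocks_filter (L P : pred nat) w : (forall y, L y -> P y) ->
  blocks L (filter P w) = map (filter P) (blocks L w).
Proof.
move=> LP; elim: w => //= x w IH.
case Px: (P x) => /=; case Lx: (L x) => /=; rewrite ?IH //.
- by rewrite Px -behead_map; case: (blocks L w).
- by move: (LP _ Lx); rewrite Px.
- by rewrite /= Px [in LHS]blocksE.
Qed.

Lemma mem_blocks L w b y : b \in blocks L w -> y \in b -> ~~ L y /\ y \in w.
Proof.
move=> bb yb; have : y \in flatten (blocks L w) by apply/flattenP; exists b.
by rewrite flatten_blocks mem_filter => /andP[].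
Qed.

Definition sorted_blocks (L : pred nat) (w : word) : word :=
  weave (map (sort leq) (blocks L w)) (filter L w).

Lemma infix_weave bs ts b : size bs = (size ts).+1 -> b \in bs -> infix b (weave bs ts).
Proof.
elim: bs ts => [|b0 bs IH] [|t ts] //=.
  by case: bs {IH} => // _; rewrite inE => /eqP ->; apply: infix_refl.
move=> [sz]; rewrite inE => /orP[/eqP ->|bb]; first exact: prefix_infix.
by apply: infix_catl; apply: (infix_catl [:: t]); exact: IH.
Qed.

Lemma weave_rcons bs ts e : size bs = (size ts).+1 ->
  weave bs ts ++ [:: e] = weave (rcons bs [::]) (rcons ts e).
Proof.
elim: bs ts => [|b bs IH] [|t ts] //=.
  by case: bs {IH} => //= _; rewrite cats0.
by move=> [sz]; rewrite -catA /= IH.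
Qed.

Definition weave_pow (x : nat) (D : seq nat) (S : word) : word :=
  weave [seq nseq d x | d <- D] S.

Lemma mem_weave_pow x D S z : z \in weave_pow x D S -> (z == x) || (z \in S).
Proof.
rewrite /weave_pow; elim: D S => [|d D IH] [|s S] //=; first by rewrite mem_nseq => /andP[_ ->].
rewrite mem_cat mem_nseq inE => /orP[/andP[_ ->]//|/orP[zs|/IH]].
  by rewrite inE zs orbT.
by case/orP=> H; rewrite ?inE H ?orbT.
Qed.

(* When [N] bounds the letters of [w], the padding letters are fresh. *)
Definition pad (N m : nat) (w : word) : word := iota N m ++ w ++ [:: N + m].

Lemma filter_pow_blocks (L : pred nat) y w : ~~ L y ->
  filter (predU (pred1 y) L) w = weave_pow y (map (count_mem y) (blocks L w)) (filter L w).
Proof.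
move=> nLy; rewrite (@filter_weave_blocks L (predU (pred1 y) L)) => [|z Lz]; last first.
  by rewrite /= Lz orbT.
rewrite /weave_pow -map_comp; congr weave; apply/eq_in_map => b bb /=.
rewrite -filter_pred1; apply: eq_in_filter => z /(mem_blocks bb) [nLz _] /=.
by rewrite (negbTE nLz) orbF.
Qed.

Lemma pow_factor_blocks m (L : pred nat) w y : ~~ L y -> ~~ pow_factor m L w y ->
  all (fun d => d < m) (map (count_mem y) (blocks L w)).
Proof.
move=> nLy npow; apply/allP => c /mapP [b bb ->]; rewrite ltnNge; apply: contra npow => mc.
rewrite /pow_factor filter_pow_blocks //; apply: (@infix_trans _ (nseq (count_mem y b) y)).
  by rewrite -(subnKC mc) nseqD prefix_infix.
apply: infix_weave; first by rewrite !size_map size_blocks.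
by apply/mapP; exists (count_mem y b) => //; apply/mapP; exists b.
Qed.

Lemma pad_filter_pow N m (L : pred nat) w y : 0 < m -> ~~ L y ->
  pad N m (filter (predU (pred1 y) L) w) = iota N m.-1 ++ (N + m.-1) ::
    weave_pow y (rcons (map (count_mem y) (blocks L w)) 0) (rcons (filter L w) (N + m)).
Proof.
move=> m0 nLy; rewrite /pad -{1}(ltn_predK m0) -addn1 iotaD -catA /= filter_pow_blocks //.
by rewrite /weave_pow map_rcons -weave_rcons // !size_map size_blocks.
Qed.

Lemma uniq_pad N m (s : seq nat) : (forall z, z \in s -> z < N) -> uniq s -> uniq (pad N m s).
Proof.
move=> Hs us; rewrite /pad cat_uniq iota_uniq cat_uniq us /= andbT orbF.
apply/andP; split; last by apply/negP => /Hs; lia.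
apply/hasPn => z; rewrite mem_cat inE mem_iota => /orP[/Hs|/eqP->]; lia.
Qed.

Section SortBlocks.
Variables (M : monoid) (HO : in_O M).

Lemma mholds_sort_weave w0 bs ts c d : perm_eq (c ++ weave bs ts ++ d) w0 ->
  (forall y, y \in flatten bs -> 1 < count_mem y w0) ->
  mholds M (c ++ weave bs ts ++ d) (c ++ weave (map (sort leq) bs) ts ++ d).
Proof.
elim: bs ts c => [|b bs IH] ts c P H /=; first exact: mholds_refl.
have Pb : perm_eq b (sort leq b) by rewrite perm_sym; apply/permPl; exact: perm_sort.
have Hb y : y \in b -> 1 < count_mem y w0 by move=> yb; apply: H; rewrite mem_cat yb.
case: ts P => [|t ts] P; first exact: (mholds_perm HO Pb P).
apply: mholds_trans (_ : mholds M (c ++ sort leq b ++ t :: weave bs ts ++ d) _).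
  by rewrite -catA /= in P *; apply: (mholds_perm HO Pb P).
have := IH ts (c ++ sort leq b ++ [:: t]); rewrite -!catA /=; apply.
  apply: perm_trans P; rewrite -!catA perm_cat2l /= -cat_cons perm_cat2r /=.
  by rewrite perm_sym.
by move=> y yb; apply: H; rewrite /= mem_cat yb orbT.
Qed.

Lemma mholds_sorted_blocks (L : pred nat) w :
  (forall y, y \in w -> ~~ L y -> 1 < count_mem y w) -> mholds M w (sorted_blocks L w).
Proof.
move=> NL; have := @mholds_sort_weave w (blocks L w) (filter L w) [::] [::].
rewrite /= !cats0 weave_blocks; apply=> // y.
by rewrite flatten_blocks mem_filter => /andP[nL yw]; apply: NL.
Qed.

End SortBlocks.

Definition linear (w : word) : pred nat := fun y => count_mem y w == 1.

Definition canon m (L : pred nat) (A : seq nat) (w : word) : word :=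
  flatten [seq nseq m x | x <- A] ++ sorted_blocks L [seq y <- w | y \notin A].

Lemma mholds_canon (M : monoid) m (L : pred nat) (A : seq nat) w : 1 < m -> in_E m M ->
  L =1 linear w -> uniq A -> {in A, forall x, pow_factor m L w x} ->
  mholds M w (canon m L A w).
Proof.
move=> hm [HO Hidem Hcent] Lw uA HA.
have NL y : y \in w -> ~~ L y -> 1 < count_mem y w.
  by rewrite Lw /linear -has_pred1 has_count => yw /eqP; lia.
have HAL x : x \in A -> ~~ L x /\ pow_factor m L w x.
  move=> /HA px; split=> //; rewrite Lw /linear; have := pow_factor_count px.
  by case: eqP => // ->; lia.
apply: mholds_trans (mholds_extract_pows HO Hidem Hcent uA HAL NL) _.
set w' := [seq y <- w | y \notin A].
suff /(mholds_sorted_blocks HO (L := L)) : forall y, y \in w' -> ~~ L y -> 1 < count_mem y w'.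
  by move/(mholds_ctx (flatten [seq nseq m x | x <- A]) [::]); rewrite !cats0.
move=> y; rewrite mem_filter => /andP[yA yw] nLy.
by rewrite count_mem_filter ?NL.
Qed.

Lemma testable_infix m u v s : testable_cond m u v -> m <= size u -> size s <= m ->
  infix s u -> infix s v.
Proof.
case=> _ _ Hi mu sm /(infix_extend sm mu) [r [rs sr ru]].
by apply: infix_trans sr _; rewrite -(Hi r rs).
Qed.

Lemma testable_nseq m (y : nat) k l : testable_cond m (nseq k y) (nseq l y) -> k < m -> l = k.
Proof.
case=> Hp _ Hi km.
have lm : l < m.
  rewrite ltnNge; apply/negP => ml.
  have : infix (nseq m y) (nseq l y) by rewrite -(subnKC ml) nseqD prefix_infix.
  by rewrite -Hi ?size_nseq // => /size_infix; rewrite !size_nseq; lia.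
move: Hp; rewrite /prefix_len !take_oversize ?size_nseq; try lia.
by move/(congr1 size); rewrite !size_nseq.
Qed.

Lemma uniq_eq_adjacent (T : eqType) (x0 : T) (z z' : seq T) :
  uniq z -> uniq z' -> size z = size z' ->
  head x0 z = head x0 z' -> (forall a b, infix [:: a; b] z -> infix [:: a; b] z') -> z = z'.
Proof.
elim: z z' => [|t r IH] [|t' r'] //= /andP[tr ur] /andP[tr' ur'] [sz] Eh Hadj; subst t'.
case: r IH tr ur sz Hadj => [|t2 r2] IH tr ur sz Hadj; first by case: r' tr' ur' sz Hadj.
have : infix [:: t; t2] (t :: r') by apply: Hadj; exact: (prefix_infix [:: t; t2] r2).
move/(infix_cons_prefix tr'); case: r' tr' ur' sz Hadj => [|t2' r2'] //= tr' ur' sz Hadj.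
rewrite ?prefix_cons => /andP[/eqP E _]; subst t2'; congr (_ :: _); apply: IH => // a b ab.
have : infix [:: a; b] (t :: t2 :: r2') by apply: Hadj; exact: (infix_catl [:: t] ab).
rewrite ?infix_consl ?prefix_cons => /orP[/andP[/eqP Eat _]|//].
by subst a; move: tr; rewrite (mem_infix ab) // mem_head.
Qed.

Lemma eq_exponent_window m (x s0 s1 : nat) d d' R R' : s0 != x -> s1 != x ->
  s0 \notin nseq d' x ++ s1 :: R' -> d < m -> d' < m ->
  (forall s, size s < m -> infix (s0 :: s) (s0 :: nseq d x ++ s1 :: R) ->
     infix (s0 :: s) (s0 :: nseq d' x ++ s1 :: R')) ->
  d = d'.
Proof.
move=> s0x s1x s0R dm d'm Hw.
case: (leqP d.+2 m) => hd.
  have : infix (s0 :: nseq d x ++ [:: s1]) (s0 :: nseq d x ++ s1 :: R).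
    have -> : s0 :: nseq d x ++ s1 :: R = (s0 :: nseq d x ++ [:: s1]) ++ R by rewrite /= -catA.
    exact: prefix_infix.
  move=> /Hw; rewrite size_cat size_nseq addn1 => /(_ hd) /(infix_cons_prefix s0R).
  exact: prefix_nseq_eq.
have : infix (s0 :: nseq m.-1 x) (s0 :: nseq d x ++ s1 :: R).
  have -> : d = m.-1 by lia.
  by rewrite -cat_cons prefix_infix.
move=> /Hw; rewrite size_nseq => /(_ ltac:(lia)) /(infix_cons_prefix s0R) /prefix_nseq_leq.
by move=> /(_ s1x); lia.
Qed.

(* The exponents [D] of [s0 x^d0 s1 x^d1 ... sk x^dk] (all [s_i] distinct from each
   other and from [x], all [d_i < m]) are recovered from the windows of length at
   most [m] that start with a letter other than [x]: each [s_i x^d_i s_(i+1)] is such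
   a window, and the last exponent is given separately. *)
Lemma eq_weave_pow_exponents m (x s0 : nat) S D D' : uniq (s0 :: S) -> x \notin s0 :: S ->
  size D = (size S).+1 -> size D' = (size S).+1 ->
  all (fun d => d < m) D -> all (fun d => d < m) D' -> last 0 D = last 0 D' ->
  (forall a s, a != x -> size (a :: s) <= m ->
     infix (a :: s) (s0 :: weave_pow x D S) -> infix (a :: s) (s0 :: weave_pow x D' S)) ->
  D = D'.
Proof.
elim: S s0 D D' => [|s1 S IH] s0 [|d0 D] [|d0' D'] //=.
  case: D => [|? D] /=; last by move=> _ _ /eqP.
  case: D' => [|? D'] /=; last by move=> _ _ _ /eqP.
  by move=> _ _ _ _ _ _ ->.
move=> /andP[s0S uS]; rewrite !inE !negb_or => /andP[xs0 /andP[xs1 xS]].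
move=> [szD] [szD'] /andP[d0m Dm] /andP[d0m' Dm'] Hl Hw.
have s0s1 : s0 != s1 by apply: contraNneq s0S => ->; rewrite mem_head.
have s0S1 : s0 \notin S by apply: contra s0S; rewrite inE => ->; rewrite orbT.
have s0x : s0 != x by rewrite eq_sym.
have Ed : d0 = d0'.
  apply: (@eq_exponent_window m x s0 s1 _ _ (weave_pow x D S) (weave_pow x D' S)) => //.
  - by rewrite eq_sym.
  - rewrite mem_cat negb_or mem_nseq (negbTE s0x) andbF /= inE negb_or s0s1 /=.
    by apply/negP => /mem_weave_pow; rewrite (negbTE s0x) (negbTE s0S1).
  - by move=> s sm; apply: Hw.
subst d0'; congr (_ :: _); apply: (IH s1) => //.
- by rewrite inE negb_or xs1.
- by move: Hl; case: D {Dm Hw} szD => // e D _; case: D' {Dm'} szD' => // e' D' _.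
move=> a s ax sz aW.
have : infix (a :: s) ((s0 :: nseq d0 x) ++ (s1 :: weave_pow x D S)) by exact: infix_catl.
move=> /(Hw _ _ ax sz) H; apply: (infix_cat_notin (p := s0 :: nseq d0 x)) H.
rewrite inE negb_or mem_nseq negb_and ax orbT andbT.
have : a \in s1 :: weave_pow x D S by apply: (mem_infix aW); rewrite mem_head.
rewrite inE => /orP[/eqP->|/mem_weave_pow]; first by rewrite eq_sym.
by rewrite (negbTE ax) /= => aS; apply: contraNneq s0S1 => <-.
Qed.

Section AdjoinOne.
Variable T : semigroup.

Lemma foldl_sop (g : nat -> T) a b s :
  foldl (fun acc y => sop acc (g y)) (sop a b) s = sop a (foldl (fun acc y => sop acc (g y)) b s).
Proof. by elim: s a b => //= y s IH a b; rewrite -sopA IH. Qed.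

Lemma seval_cons (g : nat -> T) x s : seval g (x :: s) = adj_op (Some (g x)) (seval g s).
Proof. by case: s => //= y s; rewrite foldl_sop. Qed.

Lemma meval_adjoin_one (g : nat -> T) (K : pred nat) w :
  meval (M := adjoin_one T) (fun y => if K y then Some (g y) else None) w = seval g (filter K w).
Proof.
elim: w => //= x w IH; case: (K x) => /=; rewrite IH //.
by have := seval_cons g x (filter K w); rewrite /= => <-.
Qed.

Variable m : nat.
Hypotheses (hm : 1 < m) (HT : is_Tm m T).

Lemma adjoin_one_testable u v : mholds (adjoin_one T) u v ->
  forall K : pred nat, testable_cond m (filter K u) (filter K v).
Proof.
move=> H K.
have E (g : nat -> T) : seval g (filter K u) = seval g (filter K v).
  by rewrite -!meval_adjoin_one; apply: H.
have nonempty (q : word) : q != [::] -> (forall g : nat -> T, seval g [::] = seval g q) -> False.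
  move=> qn Eg.
  have S01 : sholds T [:: 0] [:: 1].
    by move=> f; exfalso; have := Eg (fun _ => f 0); case: (q) qn.
  have [Hp _ _] := (@HT [:: 0] [:: 1] isT isT).1 S01.
  by move: Hp; rewrite /prefix_len; case: m hm => [|[|k]].
case Eu: (filter K u) => [|a s]; case Ev: (filter K v) => [|b t].
- by split => // s _.
- by exfalso; apply: (nonempty (b :: t)) => // g; rewrite -Eu -Ev E.
- by exfalso; apply: (nonempty (a :: s)) => // g; rewrite -Eu -Ev E.
- by apply: (@HT (a :: s) (b :: t) isT isT).1 => g; rewrite -Eu -Ev E.
Qed.

(* The padded words have length at least [m], so their factors of length at most [m]
   extend to factors of length exactly [m]. *)
Lemma adjoin_one_pad_infix u v N (Q : pred nat) s : mholds (adjoin_one T) u v ->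
  (forall z, z \in u ++ v -> z < N) -> size s <= m ->
  infix s (pad N m (filter Q u)) -> infix s (pad N m (filter Q v)).
Proof.
move=> Huv HN sm.
pose K z := Q z || (N <= z).
have fK w : (forall z, z \in w -> z < N) -> filter K (pad N m w) = pad N m (filter Q w).
  move=> Hw; rewrite /pad !filter_cat /= /K leq_addr orbT.
  rewrite (_ : filter _ (iota N m) = iota N m); last first.
    by apply/all_filterP/allP => z; rewrite mem_iota => /andP[-> _]; rewrite orbT.
  congr (_ ++ _ ++ _); apply: eq_in_filter => z /Hw zN.
  by rewrite leqNgt zN orbF.
have := adjoin_one_testable (mholds_ctx (iota N m) [:: N + m] Huv) K.
rewrite -!/(pad N m _) !fK => [Ht||]; last 2 first.
- by move=> z zv; apply: HN; rewrite mem_cat zv orbT.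
- by move=> z zu; apply: HN; rewrite mem_cat zu.
by apply: (testable_infix Ht) => //; rewrite /pad !size_cat size_iota; lia.
Qed.

Lemma count_mem_adjoin_one u v y : mholds (adjoin_one T) u v ->
  count_mem y u < m -> count_mem y v = count_mem y u.
Proof.
by move=> /adjoin_one_testable /(_ (pred1 y)); rewrite !filter_pred1; apply: testable_nseq.
Qed.

Lemma linear_adjoin_one u v : mholds (adjoin_one T) u v -> linear u =1 linear v.
Proof.
move=> Huv y; rewrite /linear; apply/eqP/eqP => H.
  by rewrite (count_mem_adjoin_one Huv) // H.
by rewrite (count_mem_adjoin_one (mholds_sym Huv)) // H.
Qed.

Lemma pow_factor_adjoin_one u v L x : mholds (adjoin_one T) u v ->
  pow_factor m L u x = pow_factor m L v x.
Proof.
by move=> /adjoin_one_testable /(_ (predU (pred1 x) L)) [_ _]; apply; rewrite size_nseq.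
Qed.

(* The linear letters form a duplicate-free word, which is determined by its first
   letter and its factors of length 2; padding makes the first letter fresh. *)
Lemma filter_linear_adjoin_one u v : mholds (adjoin_one T) u v ->
  filter (linear u) u = filter (linear u) v.
Proof.
move=> Huv; set L := linear u; set N := (foldr maxn 0 (u ++ v)).+1.
have HN z : z \in u ++ v -> z < N by exact: ltn_foldr_maxn.
have Lu z : L z -> count_mem z u = 1 by move/eqP.
have Lv z : L z -> count_mem z v = 1 by rewrite /L (linear_adjoin_one Huv) => /eqP.
have uniq_padL w : (forall z, L z -> count_mem z w = 1) -> {subset w <= u ++ v} ->
    uniq (pad N m (filter L w)).
  move=> Lw wuv; apply: uniq_pad (uniq_filter_linear Lw) => z.
  by rewrite mem_filter => /andP[_ /wuv /HN].
have E : pad N m (filter L u) = pad N m (filter L v).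
  apply: (uniq_eq_adjacent (x0 := 0)).
  - by apply: uniq_padL Lu _ => z zu; rewrite mem_cat zu.
  - by apply: uniq_padL Lv _ => z zv; rewrite mem_cat zv orbT.
  - rewrite !size_cat; congr (_ + (_ + _)); apply/perm_size/uniq_perm.
    + exact: uniq_filter_linear.
    + exact: uniq_filter_linear.
    move=> z; rewrite !mem_filter; case Lz: (L z) => //=.
    by rewrite -!has_pred1 !has_count Lu ?Lv.
  - by rewrite /pad; case: (m) hm.
  - by move=> a b ab; apply: adjoin_one_pad_infix Huv HN _ ab.
move: E => /(congr1 (drop m)); rewrite /pad !drop_size_cat ?size_iota // !cats1.
by move/rcons_inj; case.
Qed.

(* Between two consecutive linear letters (and at both ends, after padding) the
   number of occurrences of a letter [y] without a factor [y^m] is read off the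
   windows of length at most [m] of the word restricted to [y] and linear letters. *)
Lemma count_blocks_adjoin_one u v y : mholds (adjoin_one T) u v ->
  ~~ linear u y -> ~~ pow_factor m (linear u) u y ->
  map (count_mem y) (blocks (linear u) u) = map (count_mem y) (blocks (linear u) v).
Proof.
move=> Huv nLy npow_u; set L := linear u.
have npow_v : ~~ pow_factor m L v y by rewrite -(pow_factor_adjoin_one _ _ Huv).
have F3 : filter L u = filter L v := filter_linear_adjoin_one Huv.
set N := (foldr maxn 0 (y :: u ++ v)).+1.
have HN z : z \in u ++ v -> z < N by move=> zuv; apply: ltn_foldr_maxn; rewrite inE zuv orbT.
have yN : y < N by apply: ltn_foldr_maxn; rewrite mem_head.
set ts := filter L u.
have ts_lt z : z \in ts -> z < N.
  by rewrite mem_filter => /andP[_ zu]; apply: HN; rewrite mem_cat zu.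
have m0 : 0 < m by lia.
apply: (@rcons_injl _ 0); apply: (@eq_weave_pow_exponents m y (N + m.-1) (rcons ts (N + m))).
- rewrite /= rcons_uniq mem_rcons !inE negb_or (uniq_filter_linear (L := L)) ?andbT //; last first.
    by move=> z /eqP.
  by rewrite -andbA; apply/and3P; split; [apply/eqP | apply/negP => /ts_lt..]; lia.
- rewrite !inE mem_rcons inE !negb_or mem_filter negb_and nLy andbT.
  by apply/andP; split; apply/eqP; lia.
- by rewrite !size_rcons size_map size_blocks.
- by rewrite !size_rcons size_map size_blocks -F3.
- by rewrite all_rcons pow_factor_blocks // andbT.
- by rewrite all_rcons pow_factor_blocks // andbT.
- by rewrite !last_rcons.
move=> a s ay sz H.
have := @adjoin_one_pad_infix u v N (predU (pred1 y) L) (a :: s) Huv HN sz.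
rewrite !pad_filter_pow // -F3 => /(_ (infix_catl _ H)); apply: infix_cat_notin.
rewrite mem_iota; have := mem_infix H (mem_head a s).
rewrite inE => /orP[/eqP->|/mem_weave_pow]; first lia.
by rewrite (negbTE ay) /= mem_rcons inE => /orP[/eqP ->|/ts_lt]; lia.
Qed.

Lemma canon_adjoin_one u v A : mholds (adjoin_one T) u v ->
  (forall y, (y \in A) = pow_factor m (linear u) u y) ->
  canon m (linear u) A u = canon m (linear u) A v.
Proof.
move=> Huv HA; set L := linear u in HA *; set P := fun z => z \notin A.
have F3 : filter L u = filter L v := filter_linear_adjoin_one Huv.
have LP y : L y -> P y by rewrite /P HA => /eqP Ly; apply/negP => /pow_factor_count; lia.
have fL w : filter L (filter P w) = filter L w.
  by rewrite -filter_predI; apply: eq_filter => y /=; case Ly: (L y); rewrite //= LP.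
have size_bl : size (blocks L v) = size (blocks L u) by rewrite !size_blocks F3.
rewrite /canon /sorted_blocks !fL -F3 !(@blocks_filter L P) //; congr (_ ++ weave _ _).
apply: eq_map_sort => [|y]; first by rewrite !size_map size_bl.
case Py: (P y); last first.
  by rewrite !map_count_mem_notin ?size_map ?size_bl // => b /mapP [b' _ ->];
    rewrite mem_filter Py.
rewrite -!map_comp !(eq_map (fun b => count_mem_filter b Py)).
case Ly: (L y); last by apply: count_blocks_adjoin_one; rewrite -/L ?Ly // -HA -/(P y) Py.
by rewrite !map_count_mem_notin ?size_bl // => b /mem_blocks H; apply/negP => /H [];
  rewrite Ly.
Qed.

End AdjoinOne.

Theorem proposition5p3 (m : nat) (hm : 2 <= m) (T : semigroup) (HT : is_Tm m T) :
  forall M : monoid, in_E m M -> in_var_gen (adjoin_one T) M.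
Proof.
move=> M HM u v Huv; set L := linear u.
set A := undup [seq x <- u | pow_factor m L u x].
have HA y : (y \in A) = pow_factor m L u y.
  rewrite mem_undup mem_filter andb_idr // => /pow_factor_count cnt.
  by rewrite -has_pred1 has_count; lia.
have Au : {in A, forall x, pow_factor m L u x} by move=> x; rewrite HA.
have Av : {in A, forall x, pow_factor m L v x}.
  by move=> x; rewrite HA (pow_factor_adjoin_one hm HT _ _ Huv).
apply: mholds_trans (mholds_canon hm HM (frefl _) (undup_uniq _) Au) _.
rewrite (canon_adjoin_one hm HT Huv HA).
exact/mholds_sym/(mholds_canon hm HM (linear_adjoin_one hm HT Huv) (undup_uniq _) Av).
Qed.
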